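(* Let $n\ge 2$ and let $\mathcal{A}$ be a connected cochain DG algebra whose underlying graded algebra $\mathcal{A}^{\#}$ is the $k$-algebra generated by degree-one elements $x_1,\dots,x_n$ subject to the relations $x_ix_j=-x_jx_i$ for all $1\le i<j\le n$. Then there is a matrix $M=(m_{ij})_{n\times n}\in M_n(k)$ such that $$\partial_{\mathcal{A}}(x_i)=\sum_{j=1}^n m_{ij}x_j^2\quad\text{for all } i=1,\dots,n,$$ i.e. $(\partial_{\mathcal{A}}(x_1),\dots,\partial_{\mathcal{A}}(x_n))^T=M\,(x_1^2,\dots,x_n^2)^T$; in particular the differential $\partial_{\mathcal{A}}$ is determined by $M$.
   Context: $k$ is an algebraically closed field of characteristic zero. A connected cochain DG algebra is a graded $k$-algebra $\mathcal{A}=\bigoplus_{i\ge 0}\mathcal{A}^i$ with $\mathcal{A}^0=k$, together with a $k$-linear map $\partial_{\mathcal{A}}$ of degree $+1$ with $\partial_{\mathcal{A}}^2=0$ satisfying the Leibniz rule $\partial_{\mathcal{A}}(ab)=\partial_{\mathcal{A}}(a)b+(-1)^{|a|}a\partial_{\mathcal{A}}(b)$ for homogeneous $a,b$. $\mathcal{A}^{\#}$ denotes the underlying graded algebra. Note that no relation is imposed on the squares $x_i^2$. *)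

From HB Require Import structures.
From mathcomp Require Import all_boot all_order all_algebra.
Set Implicit Arguments. Unset Strict Implicit. Unset Printing Implicit Defensive.
Import GRing.Theory.
Local Open Scope ring_scope.

Definition is_alg_morph (k : fieldType) (A B : algType k) (f : A -> B) : Prop :=
  [/\ forall a b, f (a + b) = f a + f b,
      forall (c : k) a, f (c *: a) = c *: f a,
      forall a b, f (a * b) = f a * f b
    & f 1 = 1].

Definition anticomm_gens (k : fieldType) (n : nat) (A : algType k)
    (x : 'I_n -> A) : Prop :=
  forall i j : 'I_n, (i < j)%N -> x i * x j = - (x j * x i).

(* (A, x) is the k-algebra generated by x_1..x_n subject only to the relations
   x_i x_j = - x_j x_i (i < j): i.e. it satisfies the universal property of
   this presentation. *)
Definition anticomm_presentation (k : fieldType) (n : nat) (A : algType k)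
    (x : 'I_n -> A) : Prop :=
  anticomm_gens x /\
  forall (B : algType k) (y : 'I_n -> B), anticomm_gens y ->
    exists f : A -> B,
      [/\ is_alg_morph f, forall i, f (x i) = y i
        & forall g : A -> B, is_alg_morph g -> (forall i, g (x i) = y i) ->
            forall a, g a = f a].

(* Degree-d component of the grading in which every x_i has degree one:
   the k-span of the words of length d in the generators. *)
Definition homog (k : fieldType) (n : nat) (A : algType k) (x : 'I_n -> A)
    (d : nat) (a : A) : Prop :=
  exists c : d.-tuple 'I_n -> k,
    a = \sum_(w : d.-tuple 'I_n) c w *: \prod_(i <- w) x i.

Definition is_dg_differential (k : fieldType) (n : nat) (A : algType k)
    (x : 'I_n -> A) (dA : A -> A) : Prop :=
  [/\ forall a b, dA (a + b) = dA a + dA b,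
      forall (c : k) a, dA (c *: a) = c *: dA a,
      forall d a, homog x d a -> homog x d.+1 (dA a),
      forall a, dA (dA a) = 0
    & forall d e a b, homog x d a -> homog x e b ->
        dA (a * b) = dA a * b + (-1) ^+ d * (a * dA b)].

From HB Require Import structures.
From mathcomp Require Import all_boot all_order all_algebra.
From mathcomp Require Import ring.
Import GRing.Theory.
Set Implicit Arguments. Unset Strict Implicit.
Local Open Scope ring_scope.

(* Each d(x_i) has degree two, so d(x_i) = sum_(p,q) c_i(p,q) x_p x_q, and by
   anticommutativity it suffices to show c_i(a,b) = c_i(b,a) for a <> b.
   Applying d to x_i x_j + x_j x_i = 0 gives [d x_i, x_j] = - [d x_j, x_i].
   Push this identity through the algebra map A -> M_2(k) sending x_a, x_b to
   the Pauli matrices Z, X and the other generators to 0 (it exists by the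
   universal property): the image of d x_l is a scalar plus
   (c_l(a,b) - c_l(b,a)) ZX, and the commutators of ZX with Z and X are
   multiples of X and Z, which are linearly independent. *)

Definition commutator (R : pzRingType) (r s : R) : R := r * s - s * r.

Definition quadratic (k : fieldType) (n : nat) (B : algType k)
    (c : 'I_n -> 'I_n -> k) (z : 'I_n -> B) : B :=
  \sum_p \sum_q c p q *: (z p * z q).

Lemma sum_supported_pair (I : finType) (V : nmodType) (a b : I) (G : I -> V) :
  a != b -> (forall l, l != a -> l != b -> G l = 0) -> \sum_l G l = G a + G b.
Proof.
move=> ab G0; rewrite (bigD1 a) //= (bigD1 b) 1?eq_sym //= big1 ?addr0 //.
by move=> l /andP[la lb]; apply: G0.
Qed.

Lemma big_tuple2 (T : finType) (V : nmodType) (F : 2.-tuple T -> V) :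
  \sum_w F w = \sum_p \sum_q F [tuple p; q].
Proof.
rewrite pair_big /= (reindex (fun pq : T * T => [tuple pq.1; pq.2])) //.
exists (fun w => (tnth w ord0, tnth w ord_max)) => [[p q] _ //|w _].
by case: w => [[|p [|q []]] //= w2]; apply: val_inj.
Qed.

Lemma sum_skew_offdiag (k : fieldType) (V : lmodType k) (I : finType)
    (F : I -> I -> V) : 2%:R != 0 :> k ->
  (forall p q, p != q -> F q p = - F p q) -> \sum_p \sum_q F p q = \sum_p F p p.
Proof.
move=> two_neq0 skewF; apply: (scalerI two_neq0); rewrite !scaler_nat !mulr2n.
rewrite [X in X + _ = _]exchange_big -big_split -big_split /=.
apply: eq_bigr => p _; rewrite -big_split (bigD1 p) //= big1 ?addr0 // => q qp.
by rewrite (skewF p q) ?addNr // eq_sym.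
Qed.

Lemma anticomm_gensP (k : fieldType) (n : nat) (B : algType k) (z : 'I_n -> B) :
  anticomm_gens z -> forall i j, i != j -> z i * z j = - (z j * z i).
Proof.
move=> zA i j; rewrite -val_eqE neq_ltn => /orP[] lt_ij; first exact: zA.
by rewrite (zA j i lt_ij) opprK.
Qed.

Lemma quadratic_diag (k : fieldType) (n : nat) (B : algType k) (z : 'I_n -> B)
    (c : 'I_n -> 'I_n -> k) : 2%:R != 0 :> k -> anticomm_gens z ->
  (forall p q, p != q -> c p q = c q p) ->
  quadratic c z = \sum_p c p p *: (z p * z p).
Proof.
move=> two_neq0 zA c_sym; apply: sum_skew_offdiag => // p q pq.
by rewrite (anticomm_gensP zA) 1?eq_sym // c_sym 1?eq_sym // scalerN.
Qed.

Section AlgMorphism.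
Variables (k : fieldType) (B C : algType k) (f : B -> C).
Hypothesis f_morph : is_alg_morph f.

Lemma alg_morph0 : f 0 = 0.
Proof. by case: f_morph => _ fZ _ _; rewrite -(scale0r (0 : B)) fZ scale0r. Qed.

Lemma alg_morphB r s : f (r - s) = f r - f s.
Proof. by case: f_morph => fD fZ _ _; rewrite fD -scaleN1r fZ scaleN1r. Qed.

Lemma alg_morphN r : f (- r) = - f r.
Proof. by rewrite -sub0r alg_morphB alg_morph0 sub0r. Qed.

Lemma alg_morph_sum (I : Type) (r : seq I) (F : I -> B) :
  f (\sum_(i <- r) F i) = \sum_(i <- r) f (F i).
Proof.
elim: r => [|i r IHr]; first by rewrite !big_nil alg_morph0.
by case: f_morph => fD _ _ _; rewrite !big_cons fD IHr.
Qed.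

Lemma alg_morph_commutator r s : f (commutator r s) = commutator (f r) (f s).
Proof. by case: f_morph => _ _ fM _; rewrite alg_morphB !fM. Qed.

Lemma alg_morph_quadratic (n : nat) (c : 'I_n -> 'I_n -> k) (z : 'I_n -> B)
    (z' : 'I_n -> C) : (forall l, f (z l) = z' l) -> f (quadratic c z) = quadratic c z'.
Proof.
case: f_morph => _ fZ fM _ fz; rewrite alg_morph_sum; apply: eq_bigr => p _.
by rewrite alg_morph_sum; apply: eq_bigr => q _; rewrite fZ fM !fz.
Qed.
End AlgMorphism.

Section Pauli.
Variable k : fieldType.

Definition pauli_z : 'M[k]_2 := \matrix_(i, j) ((i == j)%:R * (-1) ^+ i).
Definition pauli_x : 'M[k]_2 := \matrix_(i, j) (i != j)%:R.

Ltac mx2_ring := apply/matrixP => -[[|[|//]] ?] -[[|[|//]] ?];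
  rewrite -?mulmxE !mxE ?big_ord_recr ?big_ord0 /= ?mxE /=; ring.

Lemma pauli_z_sqr : pauli_z * pauli_z = 1.
Proof. by mx2_ring. Qed.

Lemma pauli_x_sqr : pauli_x * pauli_x = 1.
Proof. by mx2_ring. Qed.

Lemma pauli_anticomm : pauli_x * pauli_z = - (pauli_z * pauli_x).
Proof. by mx2_ring. Qed.
End Pauli.

Section AnticommutingInvolutions.
Variables (k : fieldType) (B : algType k) (u v : B).
Hypotheses (two_neq0 : 2%:R != 0 :> k) (B_nontrivial : 1 != 0 :> B).
Hypotheses (uu : u * u = 1) (vv : v * v = 1) (vu : v * u = - (u * v)).

Lemma involution_scale_eq0 (c : k) (w : B) : w * w = 1 -> c *: w = 0 -> c = 0.
Proof.
move=> ww /(congr1 ( *%R^~ w)) /=; rewrite -scalerAl ww mul0r => /eqP.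
by rewrite scaler_eq0 (negbTE B_nontrivial) orbF => /eqP.
Qed.

Lemma anticomm_scale_indep (c d : k) : c *: u = d *: v -> c = 0.
Proof.
move=> e; have uvu : u * (d *: v) * u = - (d *: v).
  by rewrite -scalerAr -scalerAl -mulrA vu mulrN mulrA uu mul1r scalerN.
have cu : u * (c *: u) * u = c *: u by rewrite -scalerAr -scalerAl uu mul1r.
have : (c *+ 2) *: u = 0 by rewrite -scalerMnl mulr2n {1}e -cu e uvu addrN.
move/(involution_scale_eq0 uu)/eqP; rewrite -mulr_natr mulf_eq0 (negbTE two_neq0).
by rewrite orbF => /eqP.
Qed.

Lemma commutator_uv_u : commutator (u * v) u = - (v *+ 2).
Proof. by rewrite /commutator -mulrA vu mulrN mulrA uu mul1r -opprD -mulr2n. Qed.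

Lemma commutator_uv_v : commutator (u * v) v = u *+ 2.
Proof.
by rewrite /commutator -mulrA vv mulr1 mulrA vu mulNr -mulrA vv mulr1 opprK mulr2n.
Qed.

Section PairRepresentation.
Variables (n : nat) (a b : 'I_n).
Hypothesis ab : a != b.

Definition pair_rep (l : 'I_n) : B := if l == a then u else if l == b then v else 0.

Lemma pair_rep_a : pair_rep a = u.
Proof. by rewrite /pair_rep eqxx. Qed.

Lemma pair_rep_b : pair_rep b = v.
Proof. by rewrite /pair_rep eq_sym (negbTE ab) eqxx. Qed.

Lemma pair_rep_out l : l != a -> l != b -> pair_rep l = 0.
Proof. by rewrite /pair_rep => /negbTE-> /negbTE->. Qed.

Lemma pair_rep_anticomm : anticomm_gens pair_rep.
Proof.
have zero_l l m : l != a -> l != b ->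
    pair_rep l * pair_rep m = - (pair_rep m * pair_rep l).
  by move=> la lb; rewrite (pair_rep_out la lb) mul0r mulr0 oppr0.
have zero_r l m : m != a -> m != b ->
    pair_rep l * pair_rep m = - (pair_rep m * pair_rep l).
  by move=> ma mb; rewrite (pair_rep_out ma mb) mul0r mulr0 oppr0.
move=> i j lt_ij; have : i != j by rewrite -val_eqE neq_ltn lt_ij.
have [-> aj|ia] := eqVneq i a.
  have [-> |jb] := eqVneq j b; first by rewrite pair_rep_a pair_rep_b vu opprK.
  by apply: zero_r; rewrite // eq_sym.
have [-> bj|ib _] := eqVneq i b; last exact: zero_l.
have [-> |ja] := eqVneq j a; first by rewrite pair_rep_a pair_rep_b vu.
by apply: zero_r; rewrite // eq_sym.
Qed.

Lemma quadratic_pair_rep c :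
  quadratic c pair_rep = (c a a + c b b)%:A + (c a b - c b a) *: (u * v).
Proof.
rewrite /quadratic (sum_supported_pair ab) => [|p pa pb]; last first.
  by rewrite big1 // => q _; rewrite (pair_rep_out pa pb) mul0r scaler0.
rewrite !(sum_supported_pair ab);
  try by move=> q qa qb; rewrite (pair_rep_out qa qb) mulr0 scaler0.
rewrite pair_rep_a pair_rep_b uu vv vu scalerN scalerBl.
by rewrite scalerDl [- _ + _]addrC addrACA.
Qed.

Lemma commutator_quadratic_pair_rep c t :
  commutator (quadratic c pair_rep) t = (c a b - c b a) *: commutator (u * v) t.
Proof.
rewrite quadratic_pair_rep /commutator mulrDl mulrDr mulr_algl mulr_algr opprD.
by rewrite addrACA subrr add0r -scalerAl -scalerAr -scalerBr.
Qed.

Lemma quadratic_commutator_sym (c c' : 'I_n -> 'I_n -> k) l : l != b ->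
  commutator (quadratic c pair_rep) v =
    - commutator (quadratic c' pair_rep) (pair_rep l) ->
  c a b = c b a.
Proof.
move=> lb; have [e comm_l] : exists e, commutator (u * v) (pair_rep l) = e *: v.
  have [->|la] := eqVneq l a.
    by exists (- 2%:R); rewrite pair_rep_a commutator_uv_u // scaleNr scaler_nat.
  by exists 0; rewrite pair_rep_out // /commutator mulr0 mul0r subrr scale0r.
rewrite !commutator_quadratic_pair_rep comm_l commutator_uv_v //.
rewrite -scalerMnr scalerMnl scalerA -scaleNr => /anticomm_scale_indep /eqP.
by rewrite -mulr_natr mulf_eq0 (negbTE two_neq0) orbF subr_eq0 => /eqP.
Qed.
End PairRepresentation.
End AnticommutingInvolutions.

Section GradedGenerators.
Variables (k : fieldType) (n : nat) (A : algType k) (x : 'I_n -> A).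

Lemma homog_gen i : homog x 1 (x i).
Proof.
exists (fun w => (w == [tuple i])%:R); rewrite (bigD1 [tuple i]) //= eqxx scale1r.
rewrite big_cons big_nil mulr1 [X in _ + X]big1 ?addr0 // => w wi.
by rewrite (negbTE wi) scale0r.
Qed.

Lemma homog2_quadratic a : homog x 2 a -> exists c, a = quadratic c x.
Proof.
case=> c ->; exists (fun p q => c [tuple p; q]); rewrite big_tuple2.
by apply: eq_bigr => p _; apply: eq_bigr => q _; rewrite !big_cons big_nil mulr1.
Qed.

Variable dA : A -> A.
Hypothesis dA_dg : is_dg_differential x dA.

Lemma diff_gen_commutator i j : x i * x j = - (x j * x i) ->
  commutator (dA (x i)) (x j) = - commutator (dA (x j)) (x i).
Proof.
case: dA_dg => dD dZ _ _ dL anti_ij.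
have leibniz l m : dA (x l * x m) = dA (x l) * x m - x l * dA (x m).
  by have := dL 1%N 1%N _ _ (homog_gen l) (homog_gen m); rewrite expr1 mulN1r.
have : dA (x i * x j + x j * x i) = 0.
  by rewrite anti_ij addNr; have := dZ 0 0; rewrite !scale0r.
rewrite dD !leibniz addrACA [- _ - _]addrC -addrACA => sum0.
by apply/eqP; rewrite -subr_eq0 opprK -sum0.
Qed.
End GradedGenerators.

Section DifferentialCoefficients.
Variables (k : fieldType) (n : nat) (A : algType k) (x : 'I_n -> A).
Hypothesis two_neq0 : 2%:R != 0 :> k.
Hypothesis x_pres : anticomm_presentation x.
Variables (dA : A -> A) (c : 'I_n -> 'I_n -> 'I_n -> k).
Hypothesis dA_dg : is_dg_differential x dA.
Hypothesis dA_gen : forall i, dA (x i) = quadratic (c i) x.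

Lemma diff_coef_sym_off a b i : a != b -> i != b -> c i a b = c i b a.
Proof.
move=> ab ib; pose y := pair_rep (pauli_z k) (pauli_x k) a b.
have [f [f_morph fx _]] := x_pres.2 _ y (pair_rep_anticomm (pauli_anticomm k) ab).
have f_dA l : f (dA (x l)) = quadratic (c l) y.
  by rewrite dA_gen (alg_morph_quadratic f_morph _ fx).
have := congr1 f (diff_gen_commutator dA_dg (anticomm_gensP x_pres.1 ib)).
rewrite (alg_morphN f_morph) !(alg_morph_commutator f_morph) !f_dA !fx.
rewrite [y b](pair_rep_b _ _ ab).
exact: (quadratic_commutator_sym two_neq0 (oner_neq0 _) (pauli_z_sqr k)
  (pauli_x_sqr k) (pauli_anticomm k) ab ib).
Qed.

Lemma diff_coef_sym a b i : a != b -> c i a b = c i b a.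
Proof.
move=> ab; have [-> |ib] := eqVneq i b; last exact: diff_coef_sym_off.
by rewrite (@diff_coef_sym_off b a) // eq_sym.
Qed.
End DifferentialCoefficients.

Theorem theorem2p1 (k : closedFieldType) (hk : [pchar k] =i pred0)
  (n : nat) (hn : (1 < n)%N) (A : algType k) (x : 'I_n -> A)
  (hA : anticomm_presentation x) (dA : A -> A) (hd : is_dg_differential x dA) :
  exists M : 'M[k]_n,
    forall i : 'I_n, dA (x i) = \sum_(j < n) M i j *: (x j * x j).
Proof.
have two_neq0 : 2%:R != 0 :> k by move/pcharf0P: hk => ->.
have [_ _ dA_homog _ _] := hd.
have [c dA_gen] : exists c, forall i, dA (x i) = quadratic (c i) x.
  exact: fin_all_exists (fun i => homog2_quadratic (dA_homog 1%N _ (homog_gen x i))).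
exists (\matrix_(i, j) c i j j) => i.
rewrite dA_gen (quadratic_diag two_neq0 hA.1) => [|p q].
  by apply: eq_bigr => j _; rewrite mxE.
exact: (diff_coef_sym two_neq0 hA hd dA_gen).
Qed.
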